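(* Let $\mathcal G_i=G_i^S\cup G_i^I$ and $\mathcal G_j=G_j^S\cup G_j^I$ be two networks with vertex-disjoint state graphs $G_i^S=(V_i^S,E_i^S)$, $G_j^S=(V_j^S,E_j^S)$ and disjoint sets of input nodes, and suppose both $\mathcal G_i$ and $\mathcal G_j$ are strongly structurally controllable (SSC). Let the bridge graph between them consist of exactly one edge $\{k,l\}$ with $k\in V_i^S$, $l\in V_j^S$ (arbitrary). Then the merged network, whose state graph has vertex set $V_i^S\cup V_j^S$ and edge set $E_i^S\cup E_j^S\cup\{\{k,l\}\}$ and whose input nodes are those of $\mathcal G_i$ together with those of $\mathcal G_j$ (attached as before), is SSC, regardless of the choice of $k$ and $l$.
   Context: Network model: a network $\mathcal G=G^S\cup G^I$ consists of an undirected simple state graph $G^S$ on state nodes $\{1,\dots,n\}$ and a set of $m$ external input nodes $u_1,\dots,u_m$, where each input node $u_r$ has exactly one directed edge, to a state node $v_r$, and the $v_r$ are pairwise distinct; the input matrix is $B=[e_{v_1},\dots,e_{v_m}]\in\mathbb R^{n\times m}$ (standard basis vectors). The dynamics are $\dot x=Mx+Bu$, where $M$ ranges over the family $Q(G^S)$ of symmetric matrices with $M_{ij}=a_{ij}>0$ if $\{i,j\}$ is an edge of $G^S$, $M_{ij}=0$ if $i\ne j$ are non-adjacent, and $M_{ii}=-\sum_{j\in\mathcal N_i}a_{ij}+a_{ii}$ with an arbitrary self-loop weight $a_{ii}<0$ ($\mathcal N_i$ the neighbours of $i$ in $G^S$). The network is strongly structurally controllable (SSC) if for every $M\in Q(G^S)$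 the controllability matrix $[B,MB,\dots,M^{n-1}B]$ has rank $n$. A bridge graph between two vertex-disjoint state graphs is a set of edges each joining a node of one to a node of the other, such that every node is incident to at most one bridge edge. *)

From HB Require Import structures.
From mathcomp Require Import all_boot all_order all_algebra.
From mathcomp Require Import reals.
Set Implicit Arguments. Unset Strict Implicit. Unset Printing Implicit Defensive.
Import Order.TTheory GRing.Theory Num.Theory.
Local Open Scope ring_scope.

Definition simple_graph (n : nat) (e : rel 'I_n) : Prop :=
  symmetric e /\ irreflexive e.

(* Input matrix B = [e_{v_1}, ..., e_{v_m}] for input nodes u_r -> v r. *)
Definition inputB (R : realType) (n m : nat) (v : 'I_m -> 'I_n) : 'M[R]_(n, m) :=
  \matrix_(i, r) ((i == v r)%:R).

Definition inQ (R : realType) (n : nat) (e : rel 'I_n) (M : 'M[R]_n) : Prop :=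
  [/\ M^T = M,
      (forall i j, i != j -> e i j -> 0 < M i j),
      (forall i j, i != j -> ~~ e i j -> M i j = 0) &
      (forall i, exists a : R, a < 0 /\ M i i = - (\sum_(j | e i j) M i j) + a)].

Definition ctrb (R : realType) (n m : nat) (M : 'M[R]_n) (B : 'M[R]_(n, m))
  : 'M[R]_(n, \sum_(k < n) m) :=
  @mxrow R n (fun _ : 'I_n => m) n (fun k => M ^+ k *m B).

Definition SSC (R : realType) (n m : nat) (e : rel 'I_n) (v : 'I_m -> 'I_n) : Prop :=
  forall M : 'M[R]_n, inQ e M -> \rank (ctrb M (inputB R v)) = n.

Definition merge_rel (n1 n2 : nat) (e1 : rel 'I_n1) (e2 : rel 'I_n2)
  (k : 'I_n1) (l : 'I_n2) : rel 'I_(n1 + n2) :=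
  fun x y =>
    match split x, split y with
    | inl a, inl b => e1 a b
    | inr a, inr b => e2 a b
    | inl a, inr b => (a == k) && (b == l)
    | inr b, inl a => (a == k) && (b == l)
    end.

Definition merge_inputs (n1 n2 m1 m2 : nat) (v1 : 'I_m1 -> 'I_n1)
  (v2 : 'I_m2 -> 'I_n2) : 'I_(m1 + m2) -> 'I_(n1 + n2) :=
  fun r => match split r with
           | inl a => lshift n2 (v1 a)
           | inr b => rshift n1 (v2 b)
           end.

From HB Require Import structures.
From mathcomp Require Import all_boot all_order all_algebra.
From mathcomp Require Import reals complex.
From mathcomp Require Import ring lra.
Set Implicit Arguments. Unset Strict Implicit. Unset Printing Implicit Defensive.
Import Order.TTheory GRing.Theory Num.Theory.
Local Open Scope ring_scope.

(* By the Popov-Belevitch-Hautus test, a symmetric state matrix [M] fails to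
   give full controllability rank exactly when some real left eigenvector [w]
   of [M] satisfies [w B = 0].  SSC of a network excludes such eigenvectors for
   every symmetric matrix with its off-diagonal sign pattern, because the
   diagonal can always be shifted into [Q(G)].  For the merged network write
   [w = (x, y)].  If [x_k != 0], the only bridge term in the equation for [x]
   can be absorbed into the [k]-th diagonal entry of the first block, which
   contradicts SSC of [G_i]; so [x_k = 0], the bridge term drops out of the
   equation for [y], and SSC of [G_j] and then of [G_i] give [y = 0], [x = 0]. *)

Lemma stablemx_eigenvector (C : numClosedFieldType) n (A V : 'M[C]_n) :
  stablemx V A -> V != 0 ->
  exists2 z : 'rV[C]_n, z != 0 & (z <= V)%MS /\ exists mu, z *m A = mu *: z.
Proof.
move=> sVA Vnz.
have [a /eigenvalueP[v vA vnz]] : exists a, eigenvalue (restrictmx V A) a.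
  by apply: eigenvalue_closed; rewrite lt0n mxrank_eq0.
exists (v *m row_base V); first by rewrite mulmx_free_eq0 ?row_base_free.
split; first by rewrite (submx_trans (submxMl _ _)) ?eq_row_base.
have : stablemx v (restrictmx V A) by rewrite vA scalemx_sub.
by rewrite stablemx_restrict // => /sub_rVP[mu ->]; exists mu.
Qed.

Lemma mulmx_trmx_self_ge0 (R : realDomainType) n (v : 'rV[R]_n) :
  0 <= (v *m v^T) 0 0.
Proof. by rewrite mxE; apply: sumr_ge0 => j _; rewrite mxE -expr2 sqr_ge0. Qed.

Lemma mulmx_trmx_self_gt0 (R : realDomainType) n (v : 'rV[R]_n) :
  v != 0 -> 0 < (v *m v^T) 0 0.
Proof.
move=> vnz; rewrite lt_def mulmx_trmx_self_ge0 andbT.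
apply: contra vnz => /eqP; rewrite mxE => v2_0.
have sq_ge0 (i : 'I_n) : true -> 0 <= v 0 i * v^T i 0.
  by rewrite mxE -expr2 sqr_ge0.
apply/eqP/rowP => j; rewrite mxE; apply/eqP; rewrite -sqrf_eq0 expr2.
by move: (psumr_eq0P sq_ge0 v2_0) => /(_ j isT); rewrite mxE => ->.
Qed.

Lemma mulmx_eigen_exp (R : comPzRingType) n (M : 'M[R]_n) (w : 'rV[R]_n) lam j :
  w *m M = lam *: w -> w *m M ^+ j = lam ^+ j *: w.
Proof.
move=> wM; elim: j => [|j IHj]; first by rewrite !expr0 mulmx1 scale1r.
by rewrite exprSr mulmxA IHj -scalemxAl wM scalerA exprSr.
Qed.

Section RealEigenvector.
Variable R : rcfType.
Local Notation Re := (@complex.Re R).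
Local Notation Im := (@complex.Im R).
Local Notation toC := (real_complex R).

Lemma map_Re_mulmx m n p (z : 'M[R[i]]_(m, n)) (X : 'M[R]_(n, p)) :
  map_mx Re (z *m map_mx toC X) = map_mx Re z *m X.
Proof.
apply/matrixP => i j; rewrite !mxE (raddf_sum (Re : Rcomplex R -> R)).
by apply: eq_bigr => h _; rewrite !mxE; case: (z i h) => a b /=; rewrite mulr0 subr0.
Qed.

Lemma map_Im_mulmx m n p (z : 'M[R[i]]_(m, n)) (X : 'M[R]_(n, p)) :
  map_mx Im (z *m map_mx toC X) = map_mx Im z *m X.
Proof.
apply/matrixP => i j; rewrite !mxE (raddf_sum (Im : Rcomplex R -> R)).
by apply: eq_bigr => h _; rewrite !mxE; case: (z i h) => a b /=; rewrite mulr0 add0r.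
Qed.

Lemma map_Re_scalemx m n (mu : R[i]) (z : 'M[R[i]]_(m, n)) :
  map_mx Re (mu *: z) = Re mu *: map_mx Re z - Im mu *: map_mx Im z.
Proof. by apply/matrixP => i j; rewrite !mxE; case: mu; case: (z i j). Qed.

Lemma map_Im_scalemx m n (mu : R[i]) (z : 'M[R[i]]_(m, n)) :
  map_mx Im (mu *: z) = Im mu *: map_mx Re z + Re mu *: map_mx Im z.
Proof.
by apply/matrixP => i j; rewrite !mxE; case: mu; case: (z i j) => /= *; rewrite addrC.
Qed.

(* Real and imaginary parts [a], [b] of a complex eigenvector span an
   invariant plane; symmetry of [M] forces [Im mu * (|a|^2 + |b|^2) = 0]. *)
Lemma symmetric_real_eigenvector n p (M : 'M[R]_n) (K : 'M[R]_(n, p))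
    (z : 'rV[R[i]]_n) (mu : R[i]) :
  M^T = M -> z != 0 -> z *m map_mx toC M = mu *: z -> z *m map_mx toC K = 0 ->
  exists2 w : 'rV[R]_n, w != 0 & exists lam, w *m M = lam *: w /\ w *m K = 0.
Proof.
move=> symM znz zM zK.
set a := map_mx Re z; set b := map_mx Im z.
have aM : a *m M = Re mu *: a - Im mu *: b by rewrite -map_Re_mulmx zM map_Re_scalemx.
have bM : b *m M = Im mu *: a + Re mu *: b by rewrite -map_Im_mulmx zM map_Im_scalemx.
have aK : a *m K = 0 by rewrite -map_Re_mulmx zK; apply/matrixP => i j; rewrite !mxE.
have bK : b *m K = 0 by rewrite -map_Im_mulmx zK; apply/matrixP => i j; rewrite !mxE.
have ab_nz : (a != 0) || (b != 0).
  apply: contraR znz; rewrite negb_or !negbK => /andP[/eqP a0 /eqP b0].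
  apply/eqP/rowP => j; move/rowP/(_ j): a0; move/rowP/(_ j): b0.
  by rewrite !mxE; case: (z 0 j) => /= ? ? -> ->.
have tr11 (A : 'M[R]_1) : A^T = A by apply/matrixP => i j; rewrite !ord1 mxE.
have symMab : a *m M *m b^T = b *m M *m a^T.
  by rewrite -[LHS]tr11 !trmx_mul trmxK symM mulmxA.
have ba : b *m a^T = a *m b^T by rewrite -[LHS]tr11 trmx_mul trmxK.
have Im_mu0 : Im mu * ((a *m a^T) 0 0 + (b *m b^T) 0 0) = 0.
  move/matrixP/(_ 0 0): symMab.
  rewrite aM bM mulmxBl mulmxDl -!scalemxAl ba.
  move: (a *m b^T) (a *m a^T) (b *m b^T) => ab aa bb; rewrite !mxE; lra.
have norm_gt0 : 0 < (a *m a^T) 0 0 + (b *m b^T) 0 0.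
  by case/orP: ab_nz => /mulmx_trmx_self_gt0 ?;
    [rewrite ltr_pwDl ?mulmx_trmx_self_ge0 | rewrite ltr_pwDr ?mulmx_trmx_self_ge0].
have {}Im_mu0 : Im mu = 0.
  by move/eqP: Im_mu0; rewrite mulf_eq0 (gt_eqF norm_gt0) orbF => /eqP.
rewrite Im_mu0 !scale0r subr0 add0r in aM bM.
by case/orP: ab_nz => ?; [exists a | exists b] => //; exists (Re mu).
Qed.

End RealEigenvector.

Lemma horner_mx_sum (R : comNzRingType) n (M : 'M[R]_n.+1) (q : {poly R}) :
  horner_mx M q = \sum_(i < size q) q`_i *: M ^+ i.
Proof.
rewrite -{1}(coefK q) poly_def rmorph_sum; apply: eq_bigr => i _.
by rewrite -mul_polyC rmorphM /= horner_mx_C rmorphXn /= horner_mx_X [_ * _]mul_scalar_mx.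
Qed.

Lemma mulmx_exp_order_eq0 (R : comNzRingType) n m p (M : 'M[R]_n.+1)
    (K : 'M[R]_(p, n.+1)) (B : 'M[R]_(n.+1, m)) :
  (forall j : 'I_n.+1, K *m M ^+ j *m B = 0) -> K *m M ^+ n.+1 *m B = 0.
Proof.
move=> KMB0; have CH := Cayley_Hamilton M.
rewrite horner_mx_sum size_char_poly big_ord_recr /= in CH.
have lead1 : (char_poly M)`_n.+1 = 1.
  by have := monicP (char_poly_monic M); rewrite lead_coefE size_char_poly.
move/(congr1 (fun X => K *m X *m B)): CH; rewrite lead1 scale1r mulmx0 mul0mx.
rewrite mulmxDr mulmxDl mulmx_sumr mulmx_suml big1 ?add0r // => i _.
by rewrite -scalemxAr -scalemxAl KMB0 scaler0.
Qed.

Section Controllability.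
Variable R : realType.

Lemma mulmx_ctrb_eq0 n m p (M : 'M[R]_n) (B : 'M[R]_(n, m)) (K : 'M[R]_(p, n)) :
  K *m ctrb M B = 0 <-> forall j : 'I_n, K *m M ^+ j *m B = 0.
Proof.
rewrite /ctrb mul_mxrow; split=> [KC0 j|KMB0].
  by rewrite -mulmxA -(mxrowK (fun j => K *m (M ^+ j *m B)) j) KC0 submxrow0.
by rewrite -(mxrow0 (q_ := fun _ => m)); apply: eq_mxrow => j; rewrite mulmxA KMB0.
Qed.

Lemma ctrb_full_eigenvector_eq0 n m (M : 'M[R]_n) (B : 'M[R]_(n, m))
    (w : 'rV[R]_n) lam :
  \rank (ctrb M B) = n -> w *m M = lam *: w -> w *m B = 0 -> w = 0.
Proof.
move=> full wM wB; apply/eqP; rewrite -(mulmx_free_eq0 _ (introT eqP full)).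
apply/eqP/mulmx_ctrb_eq0 => j.
by rewrite (mulmx_eigen_exp _ wM) -scalemxAl wB scaler0.
Qed.

(* Popov-Belevitch-Hautus test, in the direction needed here: the left kernel
   of [ctrb M B] is [M]-invariant, so it contains a (real, by symmetry)
   eigenvector of [M]. *)
Lemma ctrb_defect_eigenvector n m (M : 'M[R]_n) (B : 'M[R]_(n, m)) :
  M^T = M -> \rank (ctrb M B) != n ->
  exists2 w : 'rV[R]_n, w != 0 & exists lam, w *m M = lam *: w /\ w *m B = 0.
Proof.
case: n M B => [|n] M B symM defect.
  by move: (rank_leq_row (ctrb M B)); rewrite leqn0 (negPf defect).
set V := kermx (ctrb M B).
have VC0 : V *m ctrb M B = 0 by apply: mulmx_ker.
have VMB0 := proj1 (mulmx_ctrb_eq0 _ _ _) VC0.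
have stableV : stablemx V M.
  rewrite sub_kermx; apply/eqP/mulmx_ctrb_eq0 => j.
  rewrite -(mulmxA V M) -[M *m M ^+ j]/(M * M ^+ j) -exprS.
  have [ltjn|lenj] := ltnP j n; first exact: (VMB0 (@Ordinal n.+1 j.+1 ltjn)).
  have -> : j = n :> nat by apply/eqP; rewrite eqn_leq lenj -ltnS ltn_ord.
  exact: mulmx_exp_order_eq0.
pose toC := real_complex R.
have [z znz [zV [mu zM]]] : exists2 z : 'rV_n.+1, z != 0 &
    (z <= map_mx toC V)%MS /\ exists mu, z *m map_mx toC M = mu *: z.
  apply: stablemx_eigenvector; last by rewrite map_mx_eq0 kermx_eq0.
  by rewrite -map_mxM map_submx.
have zC0 : z *m map_mx toC (ctrb M B) = 0.
  by apply/eqP; rewrite -sub_kermx -map_kermx.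
have [w wnz [lam [wM wC0]]] := symmetric_real_eigenvector symM znz zM zC0.
exists w => //; exists lam; split => //.
by move/mulmx_ctrb_eq0/(_ ord0): wC0; rewrite expr0 mulmx1.
Qed.

End Controllability.

Definition sym_pattern (R : numDomainType) n (e : rel 'I_n) (N : 'M[R]_n) :=
  [/\ N^T = N, forall i j, i != j -> e i j -> 0 < N i j &
      forall i j, i != j -> ~~ e i j -> N i j = 0].

Lemma inQ_sym_pattern (R : realType) n (e : rel 'I_n) (M : 'M[R]_n) :
  inQ e M -> sym_pattern e M.
Proof. by case. Qed.

Lemma sym_pattern_add_diag (R : numDomainType) n (e : rel 'I_n) (N : 'M[R]_n) d :
  sym_pattern e N -> sym_pattern e (N + diag_mx d).
Proof.
have offdiag i j : i != j -> (N + diag_mx d) i j = N i j.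
  by move=> /negPf ne_ij; rewrite !mxE ne_ij mulr0n addr0.
case=> symN posN zeroN; split=> [|i j ne_ij|i j ne_ij].
- by rewrite linearD /= tr_diag_mx symN.
- by rewrite offdiag //; apply: posN.
- by rewrite offdiag //; apply: zeroN.
Qed.

(* Shifting the diagonal by a large enough constant puts [N] into [Q(G)]
   without changing its eigenvectors. *)
Lemma SSC_eigenvector_eq0 (R : realType) n m (e : rel 'I_n) (v : 'I_m -> 'I_n)
    (N : 'M[R]_n) (x : 'rV[R]_n) mu :
  irreflexive e -> SSC R e v -> sym_pattern e N ->
  x *m N = mu *: x -> x *m inputB R v = 0 -> x = 0.
Proof.
move=> irr ssc patN xN xB.
pose T i := N i i + \sum_(j | e i j) N i j.
pose s := \sum_i `|T i| + 1.
have patN' := sym_pattern_add_diag (const_mx (- s)) patN.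
rewrite diag_const_mx in patN'; set N' := N + _ in patN'.
have QN' : inQ e N'.
  case: patN' => symN' posN' zeroN'; split=> // i.
  exists (T i - s); split.
    have le_sum : `|T i| <= \sum_k `|T k| by rewrite (bigD1 i) //= lerDl sumr_ge0.
    by rewrite subr_lt0 (le_lt_trans (ler_norm _)) // (le_lt_trans le_sum) ?ltrDl.
  have -> : \sum_(j | e i j) N' i j = \sum_(j | e i j) N i j.
    apply: eq_bigr => j eij; rewrite !mxE.
    by case: eqP eij => [->|]; rewrite ?irr ?mulr0n ?addr0.
  by rewrite !mxE eqxx mulr1n /T; ring.
apply: ctrb_full_eigenvector_eq0 (ssc _ QN') _ xB.
by rewrite mulmxDr mul_mx_scalar xN -scalerDl.
Qed.

Lemma mul_rV_delta_mx (R : pzSemiRingType) n p (u : 'rV[R]_n) (i : 'I_n) (j : 'I_p) :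
  u *m delta_mx i j = u 0 i *: delta_mx 0 j.
Proof.
apply/rowP => b; rewrite !mxE (bigD1 i) //= big1 => [|h /negPf ne_hi].
  by rewrite !mxE !eqxx addr0.
by rewrite mxE ne_hi mulr0.
Qed.

Lemma split_lshift m n (i : 'I_m) : split (lshift n i) = inl i.
Proof. exact: (unsplitK (inl i)). Qed.

Lemma split_rshift m n (i : 'I_n) : split (rshift m i) = inr i.
Proof. exact: (unsplitK (inr i)). Qed.

Lemma inputB_merge_inputs (R : realType) n1 n2 m1 m2
    (v1 : 'I_m1 -> 'I_n1) (v2 : 'I_m2 -> 'I_n2) :
  inputB R (merge_inputs v1 v2) = block_mx (inputB R v1) 0 0 (inputB R v2).
Proof.
apply/matrixP => i r; rewrite mxE /merge_inputs.
case: (split_ordP i) => a ->; case: (split_ordP r) => b ->;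
  by rewrite ?split_lshift ?split_rshift ?eq_shift
             ?block_mxEul ?block_mxEur ?block_mxEdl ?block_mxEdr !mxE.
Qed.

Section MergedNetwork.
Variables (n1 n2 : nat) (e1 : rel 'I_n1) (e2 : rel 'I_n2) (k : 'I_n1) (l : 'I_n2).
Local Notation e := (merge_rel e1 e2 k l).

Lemma merge_rel_lshift i j : e (lshift n2 i) (lshift n2 j) = e1 i j.
Proof. by rewrite /merge_rel !split_lshift. Qed.

Lemma merge_rel_rshift i j : e (rshift n1 i) (rshift n1 j) = e2 i j.
Proof. by rewrite /merge_rel !split_rshift. Qed.

Lemma merge_rel_bridge i j : e (lshift n2 i) (rshift n1 j) = (i == k) && (j == l).
Proof. by rewrite /merge_rel split_lshift split_rshift. Qed.

Variable R : numDomainType.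
Implicit Type M : 'M[R]_(n1 + n2).

Lemma sym_pattern_ulsubmx M : sym_pattern e M -> sym_pattern e1 (ulsubmx M).
Proof.
case=> symM posM zeroM; split=> [|i j ne_ij eij|i j ne_ij eij].
- by rewrite trmx_ulsub symM.
- by rewrite !mxE; apply: posM; rewrite ?eq_shift ?merge_rel_lshift.
- by rewrite !mxE; apply: zeroM; rewrite ?eq_shift ?merge_rel_lshift.
Qed.

Lemma sym_pattern_drsubmx M : sym_pattern e M -> sym_pattern e2 (drsubmx M).
Proof.
case=> symM posM zeroM; split=> [|i j ne_ij eij|i j ne_ij eij].
- by rewrite trmx_drsub symM.
- by rewrite !mxE; apply: posM; rewrite ?eq_shift ?merge_rel_rshift.
- by rewrite !mxE; apply: zeroM; rewrite ?eq_shift ?merge_rel_rshift.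
Qed.

Lemma ursubmx_merge M :
  sym_pattern e M -> ursubmx M = M (lshift n2 k) (rshift n1 l) *: delta_mx k l.
Proof.
case=> _ _ zeroM; apply/matrixP => i j; rewrite !mxE.
have [/andP[/eqP-> /eqP->]|not_kl] := boolP ((i == k) && (j == l)).
  by rewrite mulr1.
by rewrite mulr0; apply: zeroM; rewrite ?eq_shift ?merge_rel_bridge.
Qed.

Lemma dlsubmx_merge M :
  sym_pattern e M -> dlsubmx M = M (lshift n2 k) (rshift n1 l) *: delta_mx l k.
Proof.
move=> patM; have [symM _ _] := patM.
by rewrite -[in LHS]symM -trmx_ursub ursubmx_merge // linearZ /= trmx_delta.
Qed.

End MergedNetwork.

Section MergedEigenvector.
Variables (R : realType) (n1 n2 m1 m2 : nat).
Variables (e1 : rel 'I_n1) (e2 : rel 'I_n2) (v1 : 'I_m1 -> 'I_n1) (v2 : 'I_m2 -> 'I_n2).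
Variables (k : 'I_n1) (l : 'I_n2).
Hypotheses (irr1 : irreflexive e1) (irr2 : irreflexive e2).
Hypotheses (ssc1 : SSC R e1 v1) (ssc2 : SSC R e2 v2).

Lemma merge_eigenvector_eq0 (M : 'M[R]_(n1 + n2)) (w : 'rV[R]_(n1 + n2)) lam :
  sym_pattern (merge_rel e1 e2 k l) M -> w *m M = lam *: w ->
  w *m inputB R (merge_inputs v1 v2) = 0 -> w = 0.
Proof.
move=> patM; rewrite -[w]hsubmxK -{1}[M]submxK.
set x := lsubmx w; set y := rsubmx w.
rewrite mul_row_block scale_row_mx (ursubmx_merge patM) (dlsubmx_merge patM).
set c := M _ _; case/eq_row_mx => xM yM.
rewrite inputB_merge_inputs mul_row_block !mulmx0 addr0 add0r -row_mx0.
case/eq_row_mx => xB yB.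
have patM1 := sym_pattern_ulsubmx patM; have patM2 := sym_pattern_drsubmx patM.
have xk0 : x 0 k = 0.
  apply/eqP; apply: contraT => xk_nz.
  pose d : 'rV_n1 := (c * y 0 l / x 0 k) *: delta_mx 0 k.
  have xM' : x *m (ulsubmx M + diag_mx d) = lam *: x.
    rewrite mulmxDr -xM; congr (_ + _).
    rewrite -scalemxAr mul_rV_delta_mx scalerA mul_mx_diag; apply/rowP => b.
    rewrite !mxE eqxx /=; case: eqP => [->|_]; last by rewrite !mulr0.
    by rewrite !mulr1 mulrC divfK //; rewrite mxE in xk_nz.
  have := SSC_eigenvector_eq0 irr1 ssc1 (sym_pattern_add_diag d patM1) xM' xB.
  by move=> x0; move: xk_nz; rewrite x0 mxE eqxx.
have y0 : y = 0.
  rewrite -scalemxAr mul_rV_delta_mx xk0 scale0r scaler0 add0r in yM.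
  exact: SSC_eigenvector_eq0 irr2 ssc2 patM2 yM yB.
have x0 : x = 0.
  rewrite y0 mul0mx addr0 in xM.
  exact: SSC_eigenvector_eq0 irr1 ssc1 patM1 xM xB.
by rewrite x0 y0 row_mx0.
Qed.

End MergedEigenvector.

Theorem corollary2 (R : realType) (n1 n2 m1 m2 : nat)
  (e1 : rel 'I_n1) (e2 : rel 'I_n2)
  (v1 : 'I_m1 -> 'I_n1) (v2 : 'I_m2 -> 'I_n2)
  (k : 'I_n1) (l : 'I_n2) :
  simple_graph e1 -> simple_graph e2 ->
  injective v1 -> injective v2 ->
  SSC R e1 v1 -> SSC R e2 v2 ->
  SSC R (merge_rel e1 e2 k l) (merge_inputs v1 v2).
Proof.
move=> [_ irr1] [_ irr2] _ _ ssc1 ssc2 M /inQ_sym_pattern patM.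
have [symM _ _] := patM.
apply/eqP; apply: contraT => defect.
have [w w_nz [lam [wM wB]]] := ctrb_defect_eigenvector symM defect.
by rewrite (merge_eigenvector_eq0 irr1 irr2 ssc1 ssc2 patM wM wB) eqxx in w_nz.
Qed.
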